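(* Let $\mathcal{X}=\mathbb{R}^3$ with the Euclidean topology, partially ordered by the cone $\mathbb{R}^3_+$. There exist a set $\mathcal{A}\subset\mathbb{R}^3$, a linear subspace $\mathcal{M}\subset\mathbb{R}^3$ and a linear functional $\pi:\mathcal{M}\to\mathbb{R}$ such that $(\mathcal{A},\mathcal{M},\pi)$ is admissible (in the sense defined in the context) and the optimal set mapping $E:\mathbb{R}^3\rightrightarrows\mathcal{M}$ admits no continuous selection; more precisely, there is a point $x_0\in\mathbb{R}^3$ such that no map $s:\mathbb{R}^3\to\mathcal{M}$ with $s(x)\in E(x)$ for all $x\in\mathbb{R}^3$ is continuous at $x_0$.
   Context: Given a set $\mathcal{A}\subset\mathbb{R}^3$ (acceptable positions), a linear subspace $\mathcal{M}\subset\mathbb{R}^3$ (payoffs, with the relative topology) and a linear functional $\pi:\mathcal{M}\to\mathbb{R}$ (price), define the risk measure $\rho:\mathbb{R}^3\to[-\infty,+\infty]$ by $\rho(x)=\inf\{\pi(z)\,;\ z\in\mathcal{M},\ z+x\in\mathcal{A}\}$ and the optimal set mapping $E:\mathbb{R}^3\rightrightarrows\mathcal{M}$ by $E(x)=\{z\in\mathcal{M}\,;\ z+x\in\mathcal{A},\ \pi(z)=\rho(x)\}$. The triple $(\mathcal{A},\mathcal{M},\pi)$ is called admissible if: (R1) $\mathcal{A}$ is closed, convex, contains $0$, and is monotone: $x\in\mathcal{A}$ and $y-x\in\mathbb{R}^3_+$ imply $y\in\mathcal{A}$; (R2) there is no arbitrage: every $z\in\mathcal{M}\cap\mathbb{R}^3_+$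 with $z\neq0$ satisfies $\pi(z)>0$; (R3) $\rho$ is finite-valued and continuous on $\mathbb{R}^3$. *)

(* R^3 is modelled as the Coquelicot product
   space (R * R * R), whose uniform structure is the product (= Euclidean)
   topology, and whose module operations are componentwise. *)
From Stdlib Require Import Reals.
From Coquelicot Require Import Coquelicot.
Open Scope R_scope.

Definition R3 : Type := (R * R * R)%type.

Definition c1 (x : R3) : R := fst (fst x).
Definition c2 (x : R3) : R := snd (fst x).
Definition c3 (x : R3) : R := snd x.

Definition nonneg3 (x : R3) : Prop := 0 <= c1 x /\ 0 <= c2 x /\ 0 <= c3 x.

Definition convex3 (A : R3 -> Prop) : Prop :=
  forall x y (t : R), A x -> A y -> 0 <= t <= 1 ->
    A (plus (scal t x) (scal (1 - t) y)).

Definition acc_set (A : R3 -> Prop) : Prop :=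
  closed A /\ convex3 A /\ A zero /\
  (forall x y : R3, A x -> nonneg3 (minus y x) -> A y).

Definition lin_subspace (M : R3 -> Prop) : Prop :=
  M zero /\ (forall x y, M x -> M y -> M (plus x y)) /\
  (forall (a : R) x, M x -> M (scal a x)).

(* pi is a linear functional on M (its values outside M are irrelevant) *)
Definition lin_functional (M : R3 -> Prop) (pi : R3 -> R) : Prop :=
  (forall x y, M x -> M y -> pi (plus x y) = pi x + pi y) /\
  (forall (a : R) x, M x -> pi (scal a x) = a * pi x).

Definition rho (A M : R3 -> Prop) (pi : R3 -> R) (x : R3) : Rbar :=
  Glb_Rbar (fun r => exists z, M z /\ A (plus z x) /\ r = pi z).

Definition Eopt (A M : R3 -> Prop) (pi : R3 -> R) (x z : R3) : Prop :=
  M z /\ A (plus z x) /\ Finite (pi z) = rho A M pi x.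

Definition no_arbitrage (M : R3 -> Prop) (pi : R3 -> R) : Prop :=
  forall z, M z -> nonneg3 z -> z <> zero -> pi z > 0.

Definition rho_finite_continuous (A M : R3 -> Prop) (pi : R3 -> R) : Prop :=
  (forall x, is_finite (rho A M pi x)) /\
  (forall x, continuous (fun y => real (rho A M pi y)) x).

Definition admissible (A M : R3 -> Prop) (pi : R3 -> R) : Prop :=
  acc_set A /\ no_arbitrage M pi /\ rho_finite_continuous A M pi.

(* Payoffs are the z with z3 = 0, priced at z1 + z2.  The acceptance set is
   cut out by the convex cost (p, t) |-> |(1 + p, t^+)| + |(1 - p, t^-)| of the
   spread p = y1 - y2 (Euclidean norms in the plane).  By the triangle
   inequality its minimum over p is |(2, |t|)| = sqrt (4 + t^2), so rho is an
   explicit continuous function; but for t <> 0 the minimizer is unique and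
   equals the sign of t.  Hence along x = (0, 0, t) every optimal payoff has a
   spread that jumps from -1 to 1 as t crosses 0, and no selection of the
   optimal set mapping is continuous at the origin. *)

From Pilot Require Import Defs.
From Stdlib Require Import Reals Lra Psatz.
From Coquelicot Require Import Coquelicot.
Import Pilot.Defs. (* Coquelicot shadows the coordinates c1, c2, c3 *)
Open Scope R_scope.

Definition hypot (a b : R) : R := sqrt (a * a + b * b).

Lemma hypot_ge0 a b : 0 <= hypot a b.
Proof. apply sqrt_pos. Qed.

Lemma hypot_sqr a b : hypot a b * hypot a b = a * a + b * b.
Proof. apply sqrt_sqrt; nra. Qed.

Lemma hypot_norm a b : hypot a b = norm ((a, b) : R * R).
Proof.
  unfold hypot. change (norm _) with (sqrt (Rabs a ^ 2 + Rabs b ^ 2)).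
  rewrite !pow2_abs. f_equal; ring.
Qed.

Lemma hypot_0_r a : hypot a 0 = Rabs a.
Proof. unfold hypot. rewrite Rmult_0_l, Rplus_0_r. apply sqrt_Rsqr_abs. Qed.

Lemma hypot_0_l b : hypot 0 b = Rabs b.
Proof. unfold hypot. rewrite Rmult_0_l, Rplus_0_l. apply sqrt_Rsqr_abs. Qed.

Lemma hypot_triangle a b a' b' : hypot (a + a') (b + b') <= hypot a b + hypot a' b'.
Proof. rewrite !hypot_norm. apply (norm_triangle (a, b) (a', b')). Qed.

Lemma hypot_scal k a b : 0 <= k -> hypot (k * a) (k * b) = k * hypot a b.
Proof.
  intros Hk. unfold hypot.
  replace (k * a * (k * a) + k * b * (k * b)) with (k * k * (a * a + b * b)) by ring.
  rewrite sqrt_mult, sqrt_square by nra. reflexivity.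
Qed.

Lemma hypot_convex l a b a' b' : 0 <= l <= 1 ->
  hypot (l * a + (1 - l) * a') (l * b + (1 - l) * b') <= l * hypot a b + (1 - l) * hypot a' b'.
Proof.
  intros Hl. rewrite <- (hypot_scal l), <- (hypot_scal (1 - l)) by lra.
  apply hypot_triangle.
Qed.

Lemma hypot_le_r a b b' : 0 <= b <= b' -> hypot a b <= hypot a b'.
Proof. intros Hb. apply sqrt_le_1_alt. nra. Qed.

Lemma hypot_lipschitz a b a' b' : hypot a' b' <= hypot a b + Rabs (a' - a) + Rabs (b' - b).
Proof.
  replace a' with (a + ((a' - a) + 0)) at 1 by ring.
  replace b' with (b + (0 + (b' - b))) at 1 by ring.
  pose proof (hypot_triangle a b (a' - a + 0) (0 + (b' - b))).
  pose proof (hypot_triangle (a' - a) 0 0 (b' - b)).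
  rewrite hypot_0_r, hypot_0_l in *. lra.
Qed.

(* The vectors (a, t) and (b, 0) are never positively parallel when t <> 0
   and b <> 0, so the triangle inequality between them is strict. *)
Lemma hypot_triangle_eq_axis a b t :
  t <> 0 -> hypot a t + Rabs b <= hypot (a + b) t -> b = 0.
Proof.
  intros Ht H.
  pose proof (hypot_sqr a t). pose proof (hypot_sqr (a + b) t).
  pose proof (hypot_ge0 a t). pose proof (Rabs_pos b). pose proof (Rabs_pos a).
  assert (Hb2 : Rabs b * Rabs b = b * b) by (rewrite <- Rabs_mult; apply Rabs_right; nra).
  assert (Ha2 : Rabs a * Rabs a = a * a) by (rewrite <- Rabs_mult; apply Rabs_right; nra).
  assert (Hab : a * b <= Rabs a * Rabs b) by (rewrite <- Rabs_mult; apply Rle_abs).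
  assert (Hsq : hypot a t * Rabs b <= a * b) by nra.
  assert (Hlt : Rabs a < hypot a t).
  { assert (0 < t * t) by (destruct (Rlt_dec t 0); nra). nra. }
  apply Rabs_eq_0. nra.
Qed.

Definition ppart (t : R) : R := (t + Rabs t) / 2.
Definition npart (t : R) : R := (Rabs t - t) / 2.

Lemma ppart_ge0 t : 0 <= ppart t.
Proof. unfold ppart, Rabs; destruct Rcase_abs; lra. Qed.

Lemma npart_ge0 t : 0 <= npart t.
Proof. unfold npart, Rabs; destruct Rcase_abs; lra. Qed.

Lemma ppart_add_npart t : ppart t + npart t = Rabs t.
Proof. unfold ppart, npart; lra. Qed.

Lemma ppart_opp t : ppart (- t) = npart t.
Proof. unfold ppart, npart. rewrite Rabs_Ropp. lra. Qed.

Lemma npart_opp t : npart (- t) = ppart t.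
Proof. unfold ppart, npart. rewrite Rabs_Ropp. lra. Qed.

Lemma ppart_npart_nonneg t : 0 <= t -> ppart t = t /\ npart t = 0.
Proof. intros Ht. unfold ppart, npart. rewrite Rabs_right by lra. lra. Qed.

Lemma ppart_convex l t t' : 0 <= l <= 1 ->
  ppart (l * t + (1 - l) * t') <= l * ppart t + (1 - l) * ppart t'.
Proof.
  intros Hl. unfold ppart.
  pose proof (Rabs_triang (l * t) ((1 - l) * t')) as H.
  rewrite !Rabs_mult, (Rabs_right l), (Rabs_right (1 - l)) in H by lra. lra.
Qed.

Lemma npart_convex l t t' : 0 <= l <= 1 ->
  npart (l * t + (1 - l) * t') <= l * npart t + (1 - l) * npart t'.
Proof.
  intros Hl. rewrite <- !ppart_opp.
  replace (- (l * t + (1 - l) * t')) with (l * - t + (1 - l) * - t') by ring.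
  now apply ppart_convex.
Qed.

Lemma ppart_npart_variation t t' : t <= t' ->
  Rabs (ppart t' - ppart t) + Rabs (npart t' - npart t) = t' - t.
Proof.
  intros H. unfold ppart, npart.
  destruct (Rle_dec 0 t), (Rle_dec 0 t');
    rewrite ?(Rabs_right t), ?(Rabs_left t), ?(Rabs_right t'), ?(Rabs_left t') by lra;
    unfold Rabs; repeat destruct Rcase_abs; lra.
Qed.

Definition cost (p t : R) : R := hypot (1 + p) (ppart t) + hypot (1 - p) (npart t).

(* At t = 0 every p in [-1, 1] is a minimizer; the choice p = 1 is arbitrary. *)
Definition cost_argmin (t : R) : R := if Rle_dec 0 t then 1 else -1.

Lemma cost_opp p t : cost (- p) (- t) = cost p t.
Proof.
  unfold cost. rewrite ppart_opp, npart_opp.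
  replace (1 + - p) with (1 - p) by ring. replace (1 - - p) with (1 + p) by ring.
  apply Rplus_comm.
Qed.

Lemma cost_ge p t : sqrt (4 + t * t) <= cost p t.
Proof.
  replace (sqrt (4 + t * t)) with (hypot ((1 + p) + (1 - p)) (ppart t + npart t)).
  - apply hypot_triangle.
  - unfold hypot. rewrite ppart_add_npart, <- Rabs_mult, Rabs_right by nra.
    f_equal; ring.
Qed.

Lemma cost_one t : 0 <= t -> cost 1 t = sqrt (4 + t * t).
Proof.
  intros Ht. unfold cost. destruct (ppart_npart_nonneg t Ht) as [-> ->].
  replace (1 - 1) with 0 by ring. rewrite hypot_0_l, Rabs_R0, Rplus_0_r.
  unfold hypot. f_equal; ring.
Qed.

Lemma cost_argmin_spec t : cost (cost_argmin t) t = sqrt (4 + t * t).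
Proof.
  unfold cost_argmin. destruct (Rle_dec 0 t) as [Ht | Ht].
  - now apply cost_one.
  - replace (-1) with (- (1)) by ring. replace t with (- (- t)) at 1 by ring.
    rewrite cost_opp, cost_one by lra. f_equal; ring.
Qed.

Lemma cost_argmin_unique_pos p t : 0 < t -> cost p t <= sqrt (4 + t * t) -> p = 1.
Proof.
  intros Ht H. unfold cost in H. destruct (ppart_npart_nonneg t) as [Hp Hn]; [lra|].
  rewrite Hp, Hn, hypot_0_r in H.
  replace (sqrt (4 + t * t)) with (hypot ((1 + p) + (1 - p)) t) in H
    by (unfold hypot; f_equal; ring).
  apply hypot_triangle_eq_axis in H; lra.
Qed.

Lemma cost_argmin_unique_neg p t : t < 0 -> cost p t <= sqrt (4 + t * t) -> p = -1.
Proof.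
  intros Ht H. rewrite <- cost_opp in H.
  replace (t * t) with (- t * - t) in H by ring.
  apply cost_argmin_unique_pos in H; lra.
Qed.

Lemma cost_convex l p t p' t' : 0 <= l <= 1 ->
  cost (l * p + (1 - l) * p') (l * t + (1 - l) * t') <= l * cost p t + (1 - l) * cost p' t'.
Proof.
  intros Hl. unfold cost.
  assert (Hpos : hypot (1 + (l * p + (1 - l) * p')) (ppart (l * t + (1 - l) * t'))
                 <= l * hypot (1 + p) (ppart t) + (1 - l) * hypot (1 + p') (ppart t')).
  { eapply Rle_trans.
    - apply hypot_le_r. split; [apply ppart_ge0 | now apply ppart_convex].
    - replace (1 + (l * p + (1 - l) * p')) with (l * (1 + p) + (1 - l) * (1 + p')) by ring.
      now apply hypot_convex. }
  assert (Hneg : hypot (1 - (l * p + (1 - l) * p')) (npart (l * t + (1 - l) * t'))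
                 <= l * hypot (1 - p) (npart t) + (1 - l) * hypot (1 - p') (npart t')).
  { eapply Rle_trans.
    - apply hypot_le_r. split; [apply npart_ge0 | now apply npart_convex].
    - replace (1 - (l * p + (1 - l) * p')) with (l * (1 - p) + (1 - l) * (1 - p')) by ring.
      now apply hypot_convex. }
  lra.
Qed.

Lemma cost_increment p t p' t' : t <= t' ->
  cost p' t' <= cost p t + 2 * Rabs (p' - p) + (t' - t).
Proof.
  intros Ht. unfold cost.
  pose proof (hypot_lipschitz (1 + p) (ppart t) (1 + p') (ppart t')).
  pose proof (hypot_lipschitz (1 - p) (npart t) (1 - p') (npart t')).
  pose proof (ppart_npart_variation t t' Ht).
  replace (1 + p' - (1 + p)) with (p' - p) in * by ring.
  replace (1 - p' - (1 - p)) with (- (p' - p)) in * by ring.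
  rewrite Rabs_Ropp in *. lra.
Qed.

Section RealContinuity.
Context {T : UniformSpace}.
Implicit Types (f g : T -> R) (x : T).

Lemma continuous_Rplus f g x :
  continuous f x -> continuous g x -> continuous (fun y => f y + g y) x.
Proof. apply (continuous_plus f g x). Qed.

Lemma continuous_Rmult f g x :
  continuous f x -> continuous g x -> continuous (fun y => f y * g y) x.
Proof. apply (continuous_mult f g x). Qed.

Lemma continuous_Rminus f g x :
  continuous f x -> continuous g x -> continuous (fun y => f y - g y) x.
Proof. apply (continuous_minus f g x). Qed.

Lemma continuous_Rdiv_const f (c : R) x :
  continuous f x -> continuous (fun y => f y / c) x.
Proof. intros Hf. apply continuous_Rmult; [exact Hf | apply continuous_const]. Qed.

Lemma continuous_hypot f g x :
  continuous f x -> continuous g x -> continuous (fun y => hypot (f y) (g y)) x.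
Proof.
  intros Hf Hg. apply (continuous_comp _ sqrt); [|apply continuous_sqrt].
  apply continuous_Rplus; apply continuous_Rmult; assumption.
Qed.

Lemma continuous_ppart f x : continuous f x -> continuous (fun y => ppart (f y)) x.
Proof.
  intros Hf. apply continuous_Rdiv_const, continuous_Rplus; [exact Hf|].
  apply (continuous_comp f Rabs); [exact Hf | apply continuous_Rabs].
Qed.

Lemma continuous_npart f x : continuous f x -> continuous (fun y => npart (f y)) x.
Proof.
  intros Hf. apply continuous_Rdiv_const, continuous_Rminus; [|exact Hf].
  apply (continuous_comp f Rabs); [exact Hf | apply continuous_Rabs].
Qed.

Lemma continuous_cost f g x :
  continuous f x -> continuous g x -> continuous (fun y => cost (f y) (g y)) x.
Proof.
  intros Hf Hg. unfold cost.
  apply continuous_Rplus; apply continuous_hypot.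
  - apply continuous_Rplus; [apply continuous_const | exact Hf].
  - now apply continuous_ppart.
  - apply continuous_Rminus; [apply continuous_const | exact Hf].
  - now apply continuous_npart.
Qed.

End RealContinuity.

Lemma continuous_c1 (x : R3) : continuous c1 x.
Proof.
  destruct x as [[a b] c].
  apply (continuous_comp fst fst ((a, b), c)); [apply continuous_fst | apply continuous_fst].
Qed.

Lemma continuous_c2 (x : R3) : continuous c2 x.
Proof.
  destruct x as [[a b] c].
  apply (continuous_comp fst snd ((a, b), c)); [apply continuous_fst | apply continuous_snd].
Qed.

Lemma continuous_c3 (x : R3) : continuous c3 x.
Proof. destruct x as [[a b] c]. apply continuous_snd. Qed.

Lemma continuous_axis3 (t0 : R) : continuous (fun t : R => ((0, 0), t) : R3) t0.
Proof.
  apply filterlim_locally. intros eps. exists eps. intros t Ht.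
  split; [apply ball_center | exact Ht].
Qed.

Lemma c1_plus (x y : R3) : c1 (plus x y) = c1 x + c1 y. Proof. reflexivity. Qed.
Lemma c2_plus (x y : R3) : c2 (plus x y) = c2 x + c2 y. Proof. reflexivity. Qed.
Lemma c3_plus (x y : R3) : c3 (plus x y) = c3 x + c3 y. Proof. reflexivity. Qed.
Lemma c1_scal (a : R) (x : R3) : c1 (scal a x) = a * c1 x. Proof. reflexivity. Qed.
Lemma c2_scal (a : R) (x : R3) : c2 (scal a x) = a * c2 x. Proof. reflexivity. Qed.
Lemma c3_scal (a : R) (x : R3) : c3 (scal a x) = a * c3 x. Proof. reflexivity. Qed.
Lemma c1_minus (x y : R3) : c1 (minus x y) = c1 x - c1 y. Proof. reflexivity. Qed.
Lemma c2_minus (x y : R3) : c2 (minus x y) = c2 x - c2 y. Proof. reflexivity. Qed.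
Lemma c3_minus (x y : R3) : c3 (minus x y) = c3 x - c3 y. Proof. reflexivity. Qed.
Lemma c1_zero : c1 zero = 0. Proof. reflexivity. Qed.
Lemma c2_zero : c2 zero = 0. Proof. reflexivity. Qed.
Lemma c3_zero : c3 zero = 0. Proof. reflexivity. Qed.

#[local] Hint Rewrite c1_plus c2_plus c3_plus c1_scal c2_scal c3_scal
  c1_minus c2_minus c3_minus c1_zero c2_zero c3_zero : coord.

Definition acceptable (y : R3) : Prop :=
  cost (c1 y - c2 y) (c3 y) <= 2 + c3 y + 2 * (c1 y + c2 y).

Definition payoff (z : R3) : Prop := c3 z = 0.

Definition price (z : R3) : R := c1 z + c2 z.

Definition risk (x : R3) : R := (sqrt (4 + c3 x * c3 x) - 2 - c3 x) / 2 - c1 x - c2 x.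

Lemma acceptable_add_payoff x z : payoff z ->
  acceptable (plus z x) <->
  risk x + (cost (c1 z - c2 z + (c1 x - c2 x)) (c3 x) - sqrt (4 + c3 x * c3 x)) / 2
    <= price z.
Proof.
  unfold payoff, acceptable, risk, price. intros Hz.
  autorewrite with coord. rewrite Hz, Rplus_0_l.
  replace (c1 z + c1 x - (c2 z + c2 x)) with (c1 z - c2 z + (c1 x - c2 x)) by ring.
  split; intros; lra.
Qed.

Lemma rho_risk x : rho acceptable payoff price x = Finite (risk x).
Proof.
  apply is_glb_Rbar_unique. split.
  - intros r [z [Hz [HA ->]]]. apply (acceptable_add_payoff x z Hz) in HA.
    pose proof (cost_ge (c1 z - c2 z + (c1 x - c2 x)) (c3 x)). simpl. lra.
  - intros b Hb. apply Hb.
    set (q := cost_argmin (c3 x) - (c1 x - c2 x)).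
    set (z := (((risk x + q) / 2, (risk x - q) / 2), 0) : R3).
    assert (Hspread : c1 z - c2 z + (c1 x - c2 x) = cost_argmin (c3 x))
      by (change (c1 z) with ((risk x + q) / 2); change (c2 z) with ((risk x - q) / 2);
          unfold q; field).
    assert (Hprice : price z = risk x)
      by (unfold price; change (c1 z) with ((risk x + q) / 2);
          change (c2 z) with ((risk x - q) / 2); field).
    exists z. split; [reflexivity|]. split; [|now rewrite Hprice].
    apply acceptable_add_payoff; [reflexivity|].
    rewrite Hspread, cost_argmin_spec, Hprice. lra.
Qed.

Lemma optimal_payoff_cost x z : Eopt acceptable payoff price x z ->
  cost (c1 z - c2 z + (c1 x - c2 x)) (c3 x) <= sqrt (4 + c3 x * c3 x).
Proof.
  intros [Hz [HA Hopt]]. rewrite rho_risk in Hopt. injection Hopt as Hopt.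
  apply (acceptable_add_payoff x z Hz) in HA. lra.
Qed.

Lemma acceptable_closed : closed acceptable.
Proof.
  set (G := fun y : R3 => cost (c1 y - c2 y) (c3 y) - (2 + c3 y + 2 * (c1 y + c2 y))).
  apply (closed_ext (fun y => G y <= 0)); [intros y; unfold G, acceptable; split; lra|].
  apply (closed_comp G (fun u => u <= 0)); [|apply closed_le].
  intros y. change (continuous G y). unfold G. apply continuous_Rminus.
  - apply continuous_cost; [apply continuous_Rminus|]; auto using continuous_c1, continuous_c2, continuous_c3.
  - repeat first [apply continuous_Rplus | apply continuous_Rmult | apply continuous_const
                 | apply continuous_c1 | apply continuous_c2 | apply continuous_c3].
Qed.

Lemma acceptable_convex : convex3 acceptable.
Proof.
  intros x y l Hx Hy Hl. unfold acceptable in *. autorewrite with coord.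
  replace (l * c1 x + (1 - l) * c1 y - (l * c2 x + (1 - l) * c2 y))
    with (l * (c1 x - c2 x) + (1 - l) * (c1 y - c2 y)) by ring.
  pose proof (cost_convex l (c1 x - c2 x) (c3 x) (c1 y - c2 y) (c3 y) Hl).
  pose proof (Rmult_le_compat_l l _ _ (proj1 Hl) Hx).
  pose proof (Rmult_le_compat_l (1 - l) _ _ ltac:(lra) Hy).
  lra.
Qed.

Lemma acceptable_zero : acceptable zero.
Proof.
  unfold acceptable, cost. autorewrite with coord.
  destruct (ppart_npart_nonneg 0 (Rle_refl 0)) as [-> ->].
  rewrite !hypot_0_r. replace (1 + (0 - 0)) with 1 by ring.
  replace (1 - (0 - 0)) with 1 by ring. rewrite Rabs_R1. lra.
Qed.

Lemma acceptable_monotone x y : acceptable x -> nonneg3 (minus y x) -> acceptable y.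
Proof.
  intros Hx [H1 [H2 H3]]. unfold acceptable in *. autorewrite with coord in *.
  pose proof (cost_increment (c1 x - c2 x) (c3 x) (c1 y - c2 y) (c3 y) ltac:(lra)).
  pose proof (Rabs_triang (c1 y - c1 x) (- (c2 y - c2 x))) as Htri.
  rewrite Rabs_Ropp, (Rabs_right (c1 y - c1 x)), (Rabs_right (c2 y - c2 x)) in Htri by lra.
  replace (c1 y - c2 y - (c1 x - c2 x)) with (c1 y - c1 x + - (c2 y - c2 x)) in * by ring.
  lra.
Qed.

Lemma acceptable_acc_set : acc_set acceptable.
Proof.
  repeat split.
  - exact acceptable_closed.
  - exact acceptable_convex.
  - exact acceptable_zero.
  - exact acceptable_monotone.
Qed.

Lemma payoff_subspace : lin_subspace payoff.
Proof.
  unfold payoff. repeat split.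
  - intros x y Hx Hy. autorewrite with coord. rewrite Hx, Hy. ring.
  - intros a x Hx. autorewrite with coord. rewrite Hx. ring.
Qed.

Lemma price_linear : lin_functional payoff price.
Proof.
  unfold price. split; intros; autorewrite with coord; ring.
Qed.

Lemma price_no_arbitrage : no_arbitrage payoff price.
Proof.
  intros [[a b] c] Hz [Ha [Hb _]] Hne. unfold payoff, price, c1, c2, c3 in *; simpl in *.
  destruct (Rle_dec (a + b) 0); [|lra].
  exfalso. apply Hne. replace a with 0 by lra. replace b with 0 by lra. now rewrite Hz.
Qed.

Lemma continuous_risk (x : R3) : continuous risk x.
Proof.
  unfold risk.
  repeat first [apply continuous_Rminus | apply continuous_Rplus | apply continuous_Rmult
               | apply continuous_Rdiv_const | apply continuous_const
               | apply continuous_c1 | apply continuous_c2 | apply continuous_c3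
               | apply (continuous_comp _ sqrt); [|apply continuous_sqrt]].
Qed.

Lemma rho_finite_continuous_risk : rho_finite_continuous acceptable payoff price.
Proof.
  split; intros x.
  - now rewrite rho_risk.
  - apply (continuous_ext risk); [intros y; now rewrite rho_risk | apply continuous_risk].
Qed.

Lemma admissible_example : admissible acceptable payoff price.
Proof.
  split; [exact acceptable_acc_set|].
  split; [exact price_no_arbitrage | exact rho_finite_continuous_risk].
Qed.

Lemma optimal_spread_pos x z : Eopt acceptable payoff price x z -> 0 < c3 x ->
  c1 z - c2 z + (c1 x - c2 x) = 1.
Proof. intros Hz Hx. exact (cost_argmin_unique_pos _ _ Hx (optimal_payoff_cost x z Hz)). Qed.

Lemma optimal_spread_neg x z : Eopt acceptable payoff price x z -> c3 x < 0 ->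
  c1 z - c2 z + (c1 x - c2 x) = -1.
Proof. intros Hz Hx. exact (cost_argmin_unique_neg _ _ Hx (optimal_payoff_cost x z Hz)). Qed.

Lemma ball_R (x e y : R) : ball x e y <-> Rabs (y - x) < e.
Proof. reflexivity. Qed.

Lemma not_continuous_jump (g : R -> R) :
  (forall t, 0 < t -> g t = 1) -> (forall t, t < 0 -> g t = -1) -> ~ continuous g 0.
Proof.
  intros Hpos Hneg Hg.
  destruct (proj1 (filterlim_locally g (g 0)) Hg (mkposreal 1 Rlt_0_1)) as [d Hd].
  pose proof (cond_pos d).
  assert (Hr : ball (g 0) 1 (g (d / 2)))
    by (apply Hd, ball_R; rewrite Rminus_0_r, Rabs_right; lra).
  assert (Hl : ball (g 0) 1 (g (- (d / 2))))
    by (apply Hd, ball_R; rewrite Rminus_0_r, Rabs_left; lra).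
  rewrite ball_R, Hpos in Hr by lra. rewrite ball_R, Hneg in Hl by lra.
  apply Rabs_def2 in Hr. apply Rabs_def2 in Hl. lra.
Qed.

Theorem mainTheorem2 :
  exists (A M : R3 -> Prop) (pi : R3 -> R),
    lin_subspace M /\ lin_functional M pi /\ admissible A M pi /\
    exists x0 : R3,
      forall s : R3 -> R3,
        (forall x, Eopt A M pi x (s x)) -> ~ continuous s x0.
Proof.
  exists acceptable, payoff, price.
  split; [exact payoff_subspace|].
  split; [exact price_linear|].
  split; [exact admissible_example|].
  exists zero. intros s Hs Hc.
  set (axis := fun t : R => ((0, 0), t) : R3).
  assert (Hsa : continuous (fun t => s (axis t)) 0)
    by (apply (continuous_comp axis s); [apply continuous_axis3 | exact Hc]).
  apply (not_continuous_jump (fun t => c1 (s (axis t)) - c2 (s (axis t)))).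
  - intros t Ht. pose proof (optimal_spread_pos (axis t) _ (Hs (axis t)) Ht) as Hspread.
    change (c1 (axis t) - c2 (axis t)) with (0 - 0) in Hspread. lra.
  - intros t Ht. pose proof (optimal_spread_neg (axis t) _ (Hs (axis t)) Ht) as Hspread.
    change (c1 (axis t) - c2 (axis t)) with (0 - 0) in Hspread. lra.
  - apply continuous_Rminus; apply (continuous_comp _ _ 0 Hsa);
      [apply continuous_c1 | apply continuous_c2].
Qed.
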